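(* For all constants $c_1,c_2$ with $0<c_1\le c_2<1$, for all sufficiently large $n$ with $t\le c_2 n$, and for all $k$ with $c_1 n\le k\le c_2 n$, the probability that the reverse reachable set of $B$ has exactly $k$ vertices is at most $\frac{1}{n^2}$.
   Context: Random graph model: $V$ is a set of $n$ vertices, $B\subseteq V$ a target set with $|B|=t$, each $v\in V$ has a prescribed out-degree $d_v$ with $2\le d_{\min}\le d_v\le d_{\max}$ (constants independent of $n$), and for each $v$ independently its out-neighbour set is chosen uniformly at random among all $d_v$-element subsets of $V$. The reverse reachable set of $B$ is the set of vertices having a directed path to a vertex of $B$. *)

From HB Require Import structures.
From mathcomp Require Import all_boot all_order all_algebra.
From mathcomp Require Import reals.
Set Implicit Arguments. Unset Strict Implicit. Unset Printing Implicit Defensive.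
Import Order.TTheory GRing.Theory Num.Theory.

(* An outcome of the random graph on vertex set V = 'I_n is an out-neighbour
   function f : V -> {set V}. *)

(* The random graph is the uniform distribution on this set (equivalently,
   each out-neighbour set is chosen independently and uniformly among the
   d v-element subsets of V). *)
Definition configs (n : nat) (d : 'I_n -> nat) : {set {ffun 'I_n -> {set 'I_n}}} :=
  [set f : {ffun 'I_n -> {set 'I_n}} | [forall v, #|f v| == d v]].

Definition edge_rel (n : nat) (f : {ffun 'I_n -> {set 'I_n}}) : rel 'I_n :=
  fun u w => w \in f u.

Definition rev_reach (n : nat) (f : {ffun 'I_n -> {set 'I_n}}) (B : {set 'I_n})
  : {set 'I_n} :=
  [set x | [exists b in B, connect (edge_rel f) x b]].

Definition prob_rr_size (R : realType) (n : nat) (d : 'I_n -> nat)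
  (B : {set 'I_n}) (k : nat) : R :=
  ((#|[set f in configs d | #|rev_reach f B| == k]|)%:R
    / (#|configs d|)%:R)%R.

From HB Require Import structures.
From mathcomp Require Import all_boot all_order all_algebra.
From mathcomp Require Import reals sequences exp.
From mathcomp Require Import ring lra zify.
Import Order.TTheory GRing.Theory Num.Theory.

(* If the reverse reachable set has [k] vertices, its complement [T] is an
   [(n - k)]-set disjoint from [B] such that every vertex outside [B] lies in [T]
   iff all its out-neighbours do.  For a fixed [T], with [y = (n - k) / n], this
   has probability at most the product of [C(n - k, d v) / C(n, d v) <= y^2] over
   [v] in [T] and of [1 - C(n - k, d v) / C(n, d v)] over the other [v] outside [B].
   Charging a factor [y] to each vertex of [T], the sum over all [T] factors as a
   product over vertices, giving the union bound [y^(n-k) (1 + y - y^2)^n], which is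
   at most [exp (- n y (1 - sqrt y)^2)]; as [y] stays away from [0] and [1], this is
   exponentially small in [n]. *)

Lemma card_ffun_family {aT rT : finType} (F : aT -> {pred rT}) :
  #|[set f : {ffun aT -> rT} | [forall x, f x \in F x]]| = \prod_x #|F x|.
Proof.
transitivity #|family F|.
  by apply: eq_card => f; rewrite inE; apply/forallP/familyP.
by rewrite card_family foldrE big_map big_enum.
Qed.

Lemma card_configs n (d : 'I_n -> nat) : #|configs d| = \prod_v 'C(n, d v).
Proof.
transitivity (\prod_v #|[set X : {set 'I_n} | #|X| == d v]|).
  rewrite -card_ffun_family.
  by apply: eq_card => f; rewrite !inE; apply: eq_forallb => v; rewrite inE.
by apply: eq_bigr => v _; rewrite card_draws card_ord.
Qed.

Lemma card_bigcup_le {I T : finType} (P : pred I) (S : I -> {set T}) :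
  #|\bigcup_(i | P i) S i| <= \sum_(i | P i) #|S i|.
Proof.
elim/big_ind2: _ => [|m U l V leUm leVl|//]; first by rewrite cards0.
exact: leq_trans (leq_of_leqif (leq_card_setU U V)) (leq_add leUm leVl).
Qed.

Section ReverseReachable.

Context {n : nat} (d : 'I_n -> nat) (B : {set 'I_n}).

Lemma sub_rev_reach f : B \subset rev_reach f B.
Proof.
by apply/subsetP => b bB; rewrite inE; apply/existsP; exists b; rewrite bB connect0.
Qed.

Lemma notin_rev_reach f v : v \notin B ->
  (v \notin rev_reach f B) = (f v \subset ~: rev_reach f B).
Proof.
move=> vB; apply/idP/subsetP => [vR w fvw | sub].
  rewrite inE; apply: contra vR; rewrite !inE => /existsP[b /andP[bB wb]].
  by apply/existsP; exists b; rewrite bB (connect_trans (connect1 fvw)).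
rewrite inE; apply/existsP => -[b /andP[bB /connectP[[|w p] /= pth lst]]].
  by move: vB; rewrite -lst bB.
case/andP: pth => fvw pth; move: (sub w fvw); rewrite !inE => /existsP; apply.
by exists b; rewrite bB; apply/connectP; exists p.
Qed.

(* [cert_configs T]: the configurations in which [T] can be the complement of
   the reverse reachable set of [B]. *)
Definition cert_choices (T : {set 'I_n}) (v : 'I_n) : {set {set 'I_n}} :=
  [set X : {set 'I_n} | (#|X| == d v) && ((v \notin B) ==> ((v \in T) == (X \subset T)))].

Definition cert_configs (T : {set 'I_n}) : {set {ffun 'I_n -> {set 'I_n}}} :=
  [set f : {ffun 'I_n -> {set 'I_n}} | [forall v, f v \in cert_choices T v]].

Lemma cert_configs_compl_rev_reach f :
  f \in configs d -> f \in cert_configs (~: rev_reach f B).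
Proof.
rewrite !inE => /forallP cf; apply/forallP => v; rewrite inE cf /=.
by apply/implyP => vB; rewrite inE notin_rev_reach.
Qed.

Lemma card_rev_reach_eq_le k :
  #|[set f in configs d | #|rev_reach f B| == k]| <=
  \sum_(T : {set 'I_n} | (T \subset ~: B) && (#|T| == n - k)) #|cert_configs T|.
Proof.
apply: leq_trans (card_bigcup_le _ _); apply/subset_leq_card/subsetP => f.
rewrite inE => /andP[cf /eqP Rk]; apply/bigcupP; exists (~: rev_reach f B).
  by rewrite setCS sub_rev_reach cardsCs setCK card_ord Rk /=.
exact: cert_configs_compl_rev_reach.
Qed.

Lemma card_cert_choices (T : {set 'I_n}) v :
  #|cert_choices T v| =
  if v \in B then 'C(n, d v)
  else if v \in T then 'C(#|T|, d v) else 'C(n, d v) - 'C(#|T|, d v).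
Proof.
rewrite -cards_draws -[n in 'C(n, _)]card_ord -card_draws.
case: ifPn => vB.
  by apply: eq_card => X; rewrite !inE vB andbT.
case: ifPn => vT.
  by apply: eq_card => X; rewrite !inE vB vT /= [true == _]eq_sym eqb_id andbC.
set draws := [set X : {set 'I_n} | #|X| == d v].
set drawsT := [set X : {set 'I_n} | X \subset T & #|X| == d v].
have -> : cert_choices T v = draws :\: drawsT.
  apply/setP => X; rewrite !inE vB (negbTE vT) /=.
  by case: (X \subset T); case: (#|X| == d v).
by rewrite cardsDS //; apply/subsetP => X; rewrite !inE => /andP[].
Qed.

End ReverseReachable.

Lemma mul_bin_diag2 p e : 'C(p, e.+2) * (e.+2 * e.+1) = p * p.-1 * 'C(p.-2, e).
Proof.
rewrite mulnA (mulnC _ e.+2) -mul_bin_diag -mulnA (mulnC _ e.+1) -mul_bin_diag.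
by case: p => [|[|p]]; rewrite /= ?muln0 ?mul0n ?mulnA.
Qed.

Lemma leq_bin_mul_sqr m n d : 1 < d -> m <= n -> 'C(m, d) * n ^ 2 <= 'C(n, d) * m ^ 2.
Proof.
case: d => [|[|e]] // _ mn.
rewrite -(leq_pmul2r (_ : 0 < e.+2 * e.+1)) // mulnAC mul_bin_diag2.
rewrite [X in _ <= X]mulnAC mul_bin_diag2.
have binS : 'C(m.-2, e) <= 'C(n.-2, e) by apply: leq_bin2l; lia.
have mn1 : m.-1 * n <= n.-1 * m by nia.
have := leq_mul (leq_mul (leqnn (m * n)) mn1) binS.
congr (_ <= _); nia.
Qed.

Local Open Scope ring_scope.

Lemma bin_ratio_le_sqr (R : numFieldType) m n d : (1 < d)%N -> (d <= n)%N -> (m <= n)%N ->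
  'C(m, d)%:R / 'C(n, d)%:R <= (m%:R / n%:R) ^+ 2 :> R.
Proof.
move=> d1 dn mn; have n0 : (0 < n)%N by apply: leq_trans dn; apply: ltnW.
rewrite expr_div_n ler_pdivrMr ?ltr0n ?bin_gt0 // mulrAC ler_pdivlMr ?exprn_gt0 ?ltr0n //.
by rewrite -!natrX -!natrM ler_nat [X in (_ <= X)%N]mulnC leq_bin_mul_sqr.
Qed.

Lemma sum_card_prod_le (R : realFieldType) (I : finType) (P : pred {set I}) m
    (y a : R) (p q : I -> R) :
  0 < y -> (forall i, 0 <= p i) -> (forall i, 0 <= q i) -> (forall i, p i / y + q i <= a) ->
  \sum_(T : {set I} | P T && (#|T| == m)%N) \prod_i (if i \in T then p i else q i)
    <= y ^+ m * a ^+ #|I|.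
Proof.
move=> y0 p0 q0 pqa.
pose r (T : {set I}) i := if i \in T then p i / y else q i.
have r0 T i : 0 <= r T i.
  by rewrite /r; case: ifP => _; [apply: divr_ge0 (p0 i) (ltW y0) | apply: q0].
have scale (T : {set I}) : #|T| = m ->
    \prod_i (if i \in T then p i else q i) = y ^+ m * \prod_i r T i.
  move=> <-; rewrite -prodr_const [\prod_(i in T) _]big_mkcond -big_split /=.
  by apply: eq_bigr => i _; rewrite /r; case: ifP; rewrite ?mul1r // mulrC divfK ?gt_eqF.
rewrite (eq_bigr _ (fun T PT => scale T (eqP (proj2 (andP PT))))) -mulr_sumr.
rewrite ler_wpM2l ?exprn_ge0 ?(ltW y0) //.
apply: (@le_trans _ _ (\sum_T \prod_i r T i)).
  rewrite [X in _ <= X](bigID (fun T => P T && (#|T| == m)%N)) lerDl.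
  by apply: sumr_ge0 => T _; apply: prodr_ge0 => i _; apply: r0.
rewrite -bigA_distr -prodr_const; apply: ler_prod => i _.
by rewrite pqa andbT addr_ge0 // divr_ge0 // ltW.
Qed.

Section ProbabilityBound.

Context (R : realType) {n : nat} (d : 'I_n -> nat) (B : {set 'I_n}).
Hypothesis d_le_n : forall v, (d v <= n)%N.
Hypothesis d_ge2 : forall v, (1 < d v)%N.

Definition draw_in_prob (m : nat) (v : 'I_n) : R := 'C(m, d v)%:R / 'C(n, d v)%:R.
Definition cert_in_prob (m : nat) (v : 'I_n) : R := if v \in B then 0 else draw_in_prob m v.
Definition cert_out_prob (m : nat) (v : 'I_n) : R :=
  if v \in B then 1 else 1 - draw_in_prob m v.

Lemma bin_n_neq0 v : 'C(n, d v)%:R != 0 :> R.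
Proof. by rewrite pnatr_eq0 -lt0n bin_gt0. Qed.

Lemma prob_cert_configs (T : {set 'I_n}) : T \subset ~: B ->
  #|cert_configs d B T|%:R / #|configs d|%:R =
  \prod_v (if v \in T then cert_in_prob #|T| v else cert_out_prob #|T| v).
Proof.
move=> TB; rewrite card_ffun_family card_configs !natr_prod -prodf_div.
apply: eq_bigr => v _; rewrite card_cert_choices /cert_in_prob /cert_out_prob /draw_in_prob.
case: ifPn => vB.
  have vT : v \notin T by apply: contraTN vB => /(subsetP TB); rewrite inE.
  by rewrite (negbTE vT) divff ?bin_n_neq0.
case: ifP => // vT.
have Tn : (#|T| <= n)%N by rewrite -[n in (_ <= n)%N]card_ord max_card.
by rewrite natrB ?leq_bin2l // mulrDl mulNr divff ?bin_n_neq0.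
Qed.

Lemma prob_rr_size_le_sum k :
  prob_rr_size R d B k <= \sum_(T : {set 'I_n} | (T \subset ~: B) && (#|T| == n - k)%N)
    \prod_v (if v \in T then cert_in_prob (n - k) v else cert_out_prob (n - k) v).
Proof.
have prob_T (T : {set 'I_n}) : (T \subset ~: B) && (#|T| == n - k)%N ->
    #|cert_configs d B T|%:R / #|configs d|%:R =
    \prod_v (if v \in T then cert_in_prob (n - k) v else cert_out_prob (n - k) v).
  by case/andP=> TB /eqP <-; apply: prob_cert_configs.
rewrite /prob_rr_size -(eq_bigr _ prob_T) -mulr_suml -natr_sum.
by rewrite ler_wpM2r ?invr_ge0 // ler_nat card_rev_reach_eq_le.
Qed.

Lemma draw_in_prob_ge0 m v : 0 <= draw_in_prob m v.
Proof. by rewrite divr_ge0. Qed.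

Lemma prob_rr_size_le_pow k : (k < n)%N ->
  prob_rr_size R d B k <=
  ((n - k)%:R / n%:R) ^+ (n - k) * (1 + (n - k)%:R / n%:R - ((n - k)%:R / n%:R) ^+ 2) ^+ n.
Proof.
move=> kn; set y : R := (n - k)%:R / n%:R; have n0 : (0 < n)%N by apply: leq_ltn_trans kn.
have y0 : 0 < y by rewrite divr_gt0 ?ltr0n ?subn_gt0.
have y1 : y <= 1 by rewrite ler_pdivrMr ?ltr0n // mul1r ler_nat leq_subr.
have rho_le v : draw_in_prob (n - k) v <= y ^+ 2.
  by apply: bin_ratio_le_sqr; rewrite ?leq_subr.
apply: le_trans (prob_rr_size_le_sum k) _.
rewrite -[X in _ <= _ * _ ^+ X]card_ord; apply: sum_card_prod_le => // v.
- by rewrite /cert_in_prob; case: ifP => // _; apply: draw_in_prob_ge0.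
- rewrite /cert_out_prob; case: ifP => // _; rewrite subr_ge0.
  by apply: le_trans (rho_le v) _; rewrite expr_le1 // ltW.
- rewrite /cert_in_prob /cert_out_prob; have := draw_in_prob_ge0 (n - k) v.
  move: (rho_le v); case: ifP => _ rho1 rho0; rewrite ?mul0r ?add0r.
    by nra.
  have ly : draw_in_prob (n - k) v / y <= y by rewrite ler_pdivrMr // -expr2.
  have rho_t : draw_in_prob (n - k) v = draw_in_prob (n - k) v / y * y.
    by rewrite divfK ?gt_eqF.
  move: ly; rewrite [in X in _ + (1 - X)]rho_t; set t := _ / y; nra.
Qed.

End ProbabilityBound.

(* Both factors are bounded through [1 + x <= e^x], applied to [sqrt y - 1] and
   to [y - y^2]; since [m = y n], the exponents add up to [- n y (1 - sqrt y)^2]. *)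
Lemma pow_mul_pow_le_expR {R : realType} {n m : nat} {y : R} :
  0 <= y <= 1 -> m%:R = y * n%:R ->
  y ^+ m * (1 + y - y ^+ 2) ^+ n <= expR (- (n%:R * (y * (1 - Num.sqrt y) ^+ 2))).
Proof.
case/andP=> y0 y1 my; set s := Num.sqrt y.
have s0 : 0 <= s by apply: sqrtr_ge0.
have ys : y = s ^+ 2 by rewrite sqr_sqrtr.
have le_ym : y ^+ m <= expR ((2 * m)%:R * (s - 1)).
  rewrite expRM_natl ys -exprM; apply: lerXn2r; rewrite ?nnegrE ?expR_ge0 //.
  by have := expR_ge1Dx (s - 1); rewrite addrC subrK.
have le_n : (1 + y - y ^+ 2) ^+ n <= expR (n%:R * (y - y ^+ 2)).
  rewrite expRM_natl; apply: lerXn2r; rewrite ?nnegrE ?expR_ge0 -?addrA ?expR_ge1Dx //.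
  by nra.
apply: le_trans (ler_pM _ _ le_ym le_n) _; rewrite ?exprn_ge0 //; first by nra.
by rewrite -expRD ler_expR natrM my ys; nra.
Qed.

(* Uses [e^t >= t^3 / 6] at [t = x del]. *)
Lemma expR_neg_le_inv_sqr {R : realType} {x del : R} :
  0 < x -> 0 < del -> 6 <= x * del ^+ 3 -> expR (- (x * del)) <= 1 / x ^+ 2.
Proof.
move=> x0 d0 big; rewrite expRN mul1r lef_pV2 ?posrE ?expR_gt0 ?exprn_gt0 //.
apply: le_trans (expR_ge1Dxn 2 (mulr_ge0 (ltW x0) (ltW d0))).
have -> : (x * del) ^+ 3 / 3`!%:R = x ^+ 2 * (x * del ^+ 3) / 6.
  by rewrite (_ : 3`!%:R = 6 :> R) //; field.
have x2 : 0 < x ^+ 2 by rewrite exprn_gt0.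
rewrite ler_wpDl // ler_pdivlMr //; nra.
Qed.

Lemma mul_sqr_one_sub_sqrt_ge (R : rcfType) (y c1 c2 : R) :
  0 < c1 -> c2 < 1 -> 1 - c2 <= y <= 1 - c1 ->
  (1 - c2) * c1 ^+ 2 / 4 <= y * (1 - Num.sqrt y) ^+ 2.
Proof.
move=> c10 c21 /andP[yl yu]; set s := Num.sqrt y.
have s0 : 0 <= s by apply: sqrtr_ge0.
have ys : s ^+ 2 = y by rewrite sqr_sqrtr //; lra.
have le_s : c1 / 2 <= 1 - s by nra.
have le_s2 : c1 ^+ 2 / 4 <= (1 - s) ^+ 2 by nra.
nra.
Qed.

Lemma natr_mul_eventually_ge (R : archiRealFieldType) (a b : R) :
  0 < a -> exists N, forall n, (N <= n)%N -> b <= n%:R * a.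
Proof.
move=> a0; exists (Num.truncn (b / a)).+1 => n Nn.
rewrite -ler_pdivrMr //; apply: ltW; apply: lt_le_trans (truncnS_gt _) _.
by rewrite ler_nat.
Qed.

Theorem lemma14 (R : realType) (dmin dmax : nat) (c1 c2 : R) :
  (2 <= dmin)%N -> (dmin <= dmax)%N ->
  0 < c1 -> c1 <= c2 -> c2 < 1 ->
  exists N : nat, forall n : nat, (N <= n)%N ->
    forall (B : {set 'I_n}) (d : 'I_n -> nat),
      (#|B|)%:R <= c2 * n%:R ->
      (forall v, dmin <= d v <= dmax)%N ->
      forall k : nat, c1 * n%:R <= k%:R -> k%:R <= c2 * n%:R ->
        prob_rr_size R d B k <= 1 / (n%:R ^+ 2).
Proof.
move=> dmin2 _ c10 c12 c21.
set del := (1 - c2) * c1 ^+ 2 / 4.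
have del0 : 0 < del by rewrite divr_gt0 // mulr_gt0 ?subr_gt0 ?exprn_gt0.
have [N NP] := natr_mul_eventually_ge _ _ 6 (exprn_gt0 3 del0).
exists (maxn dmax.+1 N) => n; rewrite geq_max => /andP[dmax_n /NP big] B d _ d_range k kl ku.
have n0 : 0 < n%:R :> R by rewrite ltr0n (leq_ltn_trans _ dmax_n).
have kn : (k < n)%N by rewrite -(ltr_nat R) (le_lt_trans ku) // gtr_pMl.
have d_le_n v : (d v <= n)%N by case/andP: (d_range v) => _ /leq_trans; apply; apply: ltnW.
have d_ge2 v : (1 < d v)%N by case/andP: (d_range v) => /(leq_trans dmin2).
apply: le_trans (prob_rr_size_le_pow R d B d_le_n d_ge2 k kn) _.
set y := (n - k)%:R / n%:R.
have y_eq : y = 1 - k%:R / n%:R by rewrite /y natrB ?(ltnW kn) // mulrBl divff ?gt_eqF.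
have [c1_kn kn_c2] : c1 <= k%:R / n%:R /\ k%:R / n%:R <= c2.
  by split; rewrite ?ler_pdivlMr ?ler_pdivrMr.
have y01 : 0 <= y <= 1 by rewrite y_eq; apply/andP; split; lra.
have m_eq : (n - k)%:R = y * n%:R by rewrite divfK ?gt_eqF.
apply: le_trans (pow_mul_pow_le_expR y01 m_eq) _.
apply: le_trans (expR_neg_le_inv_sqr n0 del0 big); rewrite ler_expR lerN2.
apply: ler_wpM2l; first exact: ltW.
apply: mul_sqr_one_sub_sqrt_ge => //; rewrite y_eq; apply/andP; split; lra.
Qed.
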